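(* Let $H=(E,\{X_i:i\in[n]\})$ be a hypergraph such that $|X_i\cap X_j|\le1$ for all distinct $i,j\in[n]$, the line graph $G_H$ is complete, and for all distinct $p,q\in[n]$ there are elements $a\in X_p$ and $b\in X_q$ such that no $i\in[n]$ has $\{a,b\}\subseteq X_i$. Let $\rho(A)=\sum_{i=1}^n\min\{|A\cap X_i|,1\}$ for $A\subseteq E$. Let $\sigma$ be any polymatroid on $E$ with $\sigma(A)=\rho(A)$ whenever either $|A|\le2$, or $|A|=3$ and $A\subseteq X_i$ for some $i\in[n]$. If $\sigma(E)<n$, then $\sigma$ is indecomposable. In particular, the truncation $T(\rho,s)$ is indecomposable whenever $$\max\{\rho(A): |A|\le2\text{ or }A\text{ is a }3\text{-element subset of a hyperedge}\}\le s<n.$$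
   Context: A polymatroid on a finite set $E$ is a function $\rho:2^E\to\mathbb{Z}$ that is normalized, non-decreasing and submodular. A hypergraph is $H=(E,\mathcal{E})$ with $E$ finite and $\mathcal{E}=\{X_i:i\in[n]\}$ a set of nonempty subsets of $E$. The line graph $G_H$ has vertex set $[n]$ with $ij$ an edge iff $i\ne j$ and $X_i\cap X_j\ne\emptyset$. A polymatroid is indecomposable if it cannot be written as a sum $r_{M_1}+\cdots+r_{M_k}$ of rank functions of matroids on its ground set for any $k$. The truncation $T(\rho,s)$ is the polymatroid $X\mapsto\min\{\rho(X),s\}$. *)

From mathcomp Require Import all_boot all_order all_algebra.
Set Implicit Arguments. Unset Strict Implicit. Unset Printing Implicit Defensive.
Import GRing.Theory Num.Theory.
Local Open Scope ring_scope.

Definition polymatroid (E : finType) (rho : {set E} -> int) : Prop :=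
  [/\ rho set0 = 0,
      (forall A B : {set E}, A \subset B -> rho A <= rho B) &
      (forall A B : {set E}, rho (A :|: B) + rho (A :&: B) <= rho A + rho B)].

Definition matroid_rank (E : finType) (r : {set E} -> int) : Prop :=
  polymatroid r /\ (forall A : {set E}, r A <= (#|A|)%:Z).

Definition indecomposable (E : finType) (rho : {set E} -> int) : Prop :=
  ~ exists (k : nat) (M : 'I_k -> {set E} -> int),
      (forall i, matroid_rank (M i)) /\
      (forall A : {set E}, rho A = \sum_(i < k) M i A).

Definition truncation (E : finType) (rho : {set E} -> int) (s : int)
  : {set E} -> int := fun X => Num.min (rho X) s.

Definition hyp_rho (E : finType) (n : nat) (X : 'I_n -> {set E})
  : {set E} -> int := fun A => \sum_(i < n) (minn #|A :&: X i| 1)%:Z.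

Definition small_set (E : finType) (n : nat) (X : 'I_n -> {set E})
  (A : {set E}) : Prop :=
  (#|A| <= 2)%N \/ (#|A| = 3 /\ exists i, A \subset X i).

(** If sigma = r_1 + ... + r_k with matroid rank functions r_j, then on
    pairs the defect r{x} + r{y} - r{x,y} of a matroid is the indicator of "x
    and y are parallel non-loops", while that of sigma = rho counts the
    hyperedges containing x and y.  So x, y are parallel in exactly as many
    r_j as there are hyperedges through both: one if they share a hyperedge,
    none otherwise.  Since the triple defect of a 3-subset of a hyperedge is
    only 2, the three pairs of such a triple are parallel in one and the same
    r_j; hence each X_p lies in a parallel class of a single r_p.  Two hyperedges
    meet, yet contain a pair lying in no common hyperedge, so transitivity of
    parallelism makes p |-> r_p injective; each r_p has positive total rank,
    whence sigma(E) >= n. *)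

From mathcomp Require Import all_boot all_order all_algebra.
From mathcomp Require Import zify.
Import GRing.Theory Num.Theory Order.TTheory.
Set Implicit Arguments. Unset Strict Implicit. Unset Printing Implicit Defensive.
Local Open Scope ring_scope.

Lemma sum_indicator_card (I : finType) (P : pred I) :
  \sum_i (P i : nat)%:Z = #|[set i | P i]|%:Z.
Proof.
rewrite -sum1_card (big_morph Posz PoszD (erefl 0%:Z)) [RHS]big_mkcond /=.
by apply: eq_bigr => i _; rewrite inE; case: (P i).
Qed.

Lemma card_support_le_sum (I : finType) (F : I -> int) :
  (forall i, 0 <= F i) -> #|[set i | 0 < F i]|%:Z <= \sum_i F i.
Proof.
move=> F_ge0; rewrite -sum_indicator_card; apply: ler_sum => i _.
by have := F_ge0 i; case: (ltP 0 (F i)) => /=; lia.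
Qed.

Definition pair_defect (E : finType) (r : {set E} -> int) (x y : E) : int :=
  r [set x] + r [set y] - r [set x; y].

Definition triple_defect (E : finType) (r : {set E} -> int) (x y z : E) : int :=
  r [set x] + r [set y] + r [set z] - r [set x; y; z].

(* [parallel r x x] says that x is not a loop. *)
Definition parallel (E : finType) (r : {set E} -> int) (x y : E) : bool :=
  [&& r [set x] == 1, r [set y] == 1 & r [set x; y] <= 1].

Definition parallel_set (E : finType) (r : {set E} -> int) (A : {set E}) : Prop :=
  {in A &, forall x y, parallel r x y}.

Lemma parallelC (E : finType) (r : {set E} -> int) (x y : E) :
  parallel r x y = parallel r y x.
Proof. by rewrite /parallel setUC andbCA. Qed.

Lemma parallel_refl (E : finType) (r : {set E} -> int) (x y : E) :
  parallel r x y -> parallel r x x.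
Proof. by case/and3P => /eqP rx _ _; rewrite /parallel setUid rx lexx. Qed.

Section Polymatroid.
Variables (E : finType) (r : {set E} -> int).
Hypothesis r_poly : polymatroid r.

Lemma rank_mono (A B : {set E}) : A \subset B -> r A <= r B.
Proof. by case: r_poly => _ + _; apply. Qed.

Lemma rank_ge0 (A : {set E}) : 0 <= r A.
Proof. by case: r_poly => r0 _ _; rewrite -r0 rank_mono ?sub0set. Qed.

Lemma rank_subadd (A B : {set E}) : r (A :|: B) <= r A + r B.
Proof.
by case: r_poly => _ _ /(_ A B); have := rank_ge0 (A :&: B); lia.
Qed.

Lemma rank_le_cover (A B C : {set E}) : C \subset A :|: B -> r C <= r A + r B.
Proof. by move/rank_mono; have := rank_subadd A B; lia. Qed.

Lemma triple_defect_ge0 (x y z : E) : 0 <= triple_defect r x y z.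
Proof.
have := rank_subadd [set x; y] [set z]; have := rank_subadd [set x] [set y].
by rewrite /triple_defect; lia.
Qed.

End Polymatroid.

Section Matroid.
Variables (E : finType) (r : {set E} -> int).
Hypothesis r_matroid : matroid_rank r.

Let r_poly : polymatroid r. Proof. by case: r_matroid. Qed.

Lemma rank_set1_le1 (x : E) : r [set x] <= 1.
Proof. by case: r_matroid => _ /(_ [set x]); rewrite cards1. Qed.

Lemma pair_defect_parallel (x y : E) :
  pair_defect r x y = (parallel r x y : nat)%:Z.
Proof.
have rxy_ge_x : r [set x] <= r [set x; y] by apply/(rank_mono r_poly)/subsetUl.
have rxy_ge_y : r [set y] <= r [set x; y] by apply/(rank_mono r_poly)/subsetUr.
have := rank_set1_le1 x; have := rank_set1_le1 y.
have := rank_ge0 r_poly [set x]; have := rank_ge0 r_poly [set y].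
have := rank_subadd r_poly [set x] [set y].
rewrite /pair_defect /parallel.
case: (r [set x] =P 1); case: (r [set y] =P 1).
all: by case: (leP (r [set x; y]) 1) => /=; lia.
Qed.

Lemma parallel_trans (y x z : E) :
  parallel r x y -> parallel r y z -> parallel r x z.
Proof.
move=> /and3P[rx /eqP ry rxy] /and3P[_ rz ryz]; rewrite /parallel rx rz /=.
have r_cap : r [set y] <= r ([set x; y] :&: [set y; z]).
  by apply: (rank_mono r_poly); rewrite subsetI !sub1set !inE !eqxx !orbT.
have r_cup : r [set x; z] <= r ([set x; y] :|: [set y; z]).
  by apply: (rank_mono r_poly); rewrite subUset !sub1set !inE !eqxx !orbT.
by case: r_poly => _ _ /(_ [set x; y] [set y; z]); lia.
Qed.

Lemma triple_defect_gt0 (x y z : E) :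
  [|| parallel r x y, parallel r x z | parallel r y z] ->
  0 < triple_defect r x y z.
Proof.
rewrite /triple_defect => /or3P[] /and3P[/eqP r1 /eqP r2 r12].
- have := rank_le_cover r_poly (subxx [set x; y; z]); lia.
- have : [set x; y; z] \subset [set x; z] :|: [set y].
    by rewrite !subUset !sub1set !inE !eqxx !orbT.
  by move/(rank_le_cover r_poly); lia.
- have : [set x; y; z] \subset [set y; z] :|: [set x].
    by rewrite !subUset !sub1set !inE !eqxx !orbT.
  by move/(rank_le_cover r_poly); lia.
Qed.

Lemma parallel_set_from_pivot (x : E) (A : {set E}) :
  {in A, forall z, parallel r x z} -> parallel_set r A.
Proof.
move=> pxA z w /pxA pxz /pxA pxw.
by apply: (parallel_trans (y := x)); rewrite // parallelC.
Qed.

Lemma parallel_set_rank_gt0 (A : {set E}) :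
  A != set0 -> parallel_set r A -> 0 < r [set: E].
Proof.
case/set0Pn=> x xA /(_ x x xA xA) /and3P[/eqP rx _ _].
by have := rank_mono r_poly (subsetT [set x]); lia.
Qed.

End Matroid.

Section Hypergraph.
Variables (E : finType) (n : nat) (X : 'I_n -> {set E}).

Definition common_edges (x y : E) : {set 'I_n} :=
  [set i | (x \in X i) && (y \in X i)].

Lemma minn_cardI1 (A B : {set E}) : minn #|A :&: B| 1 = (A :&: B != set0).
Proof. by rewrite -card_gt0; case: #|_|. Qed.

Lemma hyp_rho_pair_defect (x y : E) :
  pair_defect (hyp_rho X) x y = #|common_edges x y|%:Z.
Proof.
rewrite /pair_defect /hyp_rho -big_split -sumrB -sum_indicator_card /=.
apply: eq_bigr => i _.
rewrite !minn_cardI1 !setIUl !setU_eq0 !setI_eq0 !disjoints1.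
by case: (x \in X i); case: (y \in X i).
Qed.

Hypothesis X_meet_le1 : forall i j, i != j -> (#|X i :&: X j| <= 1)%N.
Hypothesis X_neq0 : forall p, X p != set0.
Hypothesis X_meet_neq0 : forall p q, p != q -> X p :&: X q != set0.
Hypothesis X_separated : forall p q, p != q ->
  exists a b, [/\ a \in X p, b \in X q & forall i, ~ (a \in X i /\ b \in X i)].

Lemma card_common_edges_le1 (x y : E) : x != y -> (#|common_edges x y| <= 1)%N.
Proof.
move=> xy; apply/card_le1_eqP => i j; rewrite !inE => /andP[xi yi] /andP[xj yj].
apply/eqP/negPn/negP => /X_meet_le1; apply/negP; rewrite -ltnNge.
have : [set x; y] \subset X i :&: X j.
  by rewrite subUset !sub1set !inE xi yi xj yj.
by move/subset_leq_card; rewrite setIC cards2 xy.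
Qed.

Lemma hyp_rho_triple_defect (p : 'I_n) (x y z : E) :
  x != y -> x != z -> y != z -> x \in X p -> y \in X p -> z \in X p ->
  triple_defect (hyp_rho X) x y z = 2.
Proof.
move=> xy xz yz xp yp zp.
have unique_edge u v i :
    u != v -> u \in X p -> v \in X p -> u \in X i -> v \in X i -> i = p.
  move=> uv up vp ui vi; move/card_le1_eqP: (card_common_edges_le1 uv).
  by apply; rewrite inE ?ui ?vi ?up ?vp.
rewrite /triple_defect /hyp_rho -!big_split -sumrB /= (bigD1 p) //=.
rewrite big1 => [|i ip].
  by rewrite !minn_cardI1 !setIUl !setU_eq0 !setI_eq0 !disjoints1 xp yp zp.
rewrite !minn_cardI1 !setIUl !setU_eq0 !setI_eq0 !disjoints1.
case xi: (x \in X i); case yi: (y \in X i); case zi: (z \in X i) => //=;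
  case/eqP: ip; first [exact: unique_edge xy xp yp xi yi
    | exact: unique_edge xz xp zp xi zi | exact: unique_edge yz yp zp yi zi].
Qed.

Section Decomposition.
Variables (sigma : {set E} -> int) (k : nat) (M : 'I_k -> {set E} -> int).
Hypothesis M_matroid : forall j, matroid_rank (M j).
Hypothesis sigma_sum : forall A, sigma A = \sum_j M j A.
Hypothesis sigma_small : forall A, small_set X A -> sigma A = hyp_rho X A.

Let M_poly j : polymatroid (M j). Proof. by case: (M_matroid j). Qed.

Lemma card_parallel (x y : E) :
  #|[set j | parallel (M j) x y]| = #|common_edges x y|.
Proof.
apply/eqP; rewrite -eqz_nat -sum_indicator_card -hyp_rho_pair_defect.
under eq_bigr do rewrite -(pair_defect_parallel (M_matroid _)).
rewrite /pair_defect -!sigma_small; last 3 first.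
- by left; rewrite cards2; case: (x != y).
- by left; rewrite cards1.
- by left; rewrite cards1.
by rewrite !sigma_sum sumrB big_split.
Qed.

Lemma sum_triple_defect (p : 'I_n) (x y z : E) :
  x != y -> x != z -> y != z -> x \in X p -> y \in X p -> z \in X p ->
  \sum_j triple_defect (M j) x y z = 2.
Proof.
move=> xy xz yz xp yp zp; rewrite -(hyp_rho_triple_defect xy xz yz xp yp zp).
rewrite /triple_defect -!sigma_small; last 4 first.
- right; split; last by exists p; rewrite !subUset !sub1set xp yp zp.
  by rewrite setUC cardsU1 cards2 !inE xy negb_or !(eq_sym z) xz yz.
- by left; rewrite cards1.
- by left; rewrite cards1.
- by left; rewrite cards1.
by rewrite !sigma_sum sumrB !big_split.
Qed.

Lemma parallel_unique (x y : E) (j j' : 'I_k) :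
  x != y -> parallel (M j) x y -> parallel (M j') x y -> j = j'.
Proof.
move=> xy pj pj'; have : (#|[set j | parallel (M j) x y]| <= 1)%N.
  by rewrite card_parallel card_common_edges_le1.
by move/card_le1_eqP; apply; rewrite inE.
Qed.

Lemma exists_parallel (p : 'I_n) (x y : E) :
  x \in X p -> y \in X p -> exists j, parallel (M j) x y.
Proof.
move=> xp yp; have /card_gt0P[j] : (0 < #|[set j | parallel (M j) x y]|)%N.
  by rewrite card_parallel card_gt0; apply/set0Pn; exists p; rewrite inE xp yp.
by rewrite inE; exists j.
Qed.

Lemma no_parallel (a b : E) (j : 'I_k) :
  (forall i, ~ (a \in X i /\ b \in X i)) -> ~~ parallel (M j) a b.
Proof.
move=> nab; apply/negP => pj.
have : (0 < #|[set j | parallel (M j) a b]|)%N.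
  by apply/card_gt0P; exists j; rewrite inE.
rewrite card_parallel card_gt0 => /set0Pn[i].
by rewrite inE => /andP[ai bi]; apply: (nab i).
Qed.

Lemma parallel_extend (p : 'I_n) (j : 'I_k) (x y z : E) :
  x != y -> x != z -> y != z -> x \in X p -> y \in X p -> z \in X p ->
  parallel (M j) x y -> parallel (M j) x z.
Proof.
move=> xy xz yz xp yp zp pxy; apply/negPn/negP => npxz.
have [i pxz] := exists_parallel xp zp.
have [i' pyz] := exists_parallel yp zp.
have ij : i != j by apply: contraNneq npxz => <-.
have i'j : i' != j.
  apply: contraNneq npxz => e; subst i'.
  exact: (parallel_trans (M_matroid j) pxy pyz).
have ii' : i != i'.
  apply/eqP => e; subst i'; case/eqP: ij; apply: (parallel_unique xy _ pxy).
  by apply: (parallel_trans (M_matroid i) pxz); rewrite parallelC.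
(* Otherwise j, i, i' are distinct, each with positive triple defect,
   while these defects sum to 2. *)
have := card_support_le_sum (fun j => triple_defect_ge0 (M_poly j) x y z).
rewrite (sum_triple_defect xy xz yz xp yp zp).
have : [set j; i; i'] \subset [set j | 0 < triple_defect (M j) x y z].
  apply/subsetP => l; rewrite !inE => /orP[/orP[]|] /eqP ->;
    apply: (triple_defect_gt0 (M_matroid _)); by rewrite ?pxy ?pxz ?pyz ?orbT.
move/subset_leq_card; rewrite setUC !cardsU1 cards1 !inE (negbTE i'j).
rewrite (eq_sym i') (negbTE ii') (eq_sym j) ij /=; lia.
Qed.

Lemma exists_parallel_set (p : 'I_n) : exists j, parallel_set (M j) (X p).
Proof.
have /set0Pn[x xp] := X_neq0 p.
suff [j pxXp] : exists j, {in X p, forall z, parallel (M j) x z}.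
  by exists j; exact: (parallel_set_from_pivot (M_matroid j) pxXp).
case: (pickP (fun y => (y \in X p) && (y != x))) => [y /andP[yp yx] | Xp1].
  have [j pxy] := exists_parallel xp yp; exists j => z zp.
  have [->|zx] := eqVneq z x; first exact: (parallel_refl pxy).
  have [->//|zy] := eqVneq z y.
  by apply: (parallel_extend _ _ _ xp yp zp pxy); rewrite eq_sym.
have [j pxx] := exists_parallel xp xp; exists j => z zp.
by move: (Xp1 z); rewrite /= zp => /negbFE/eqP->.
Qed.

Lemma parallel_set_unique (j : 'I_k) (p q : 'I_n) :
  parallel_set (M j) (X p) -> parallel_set (M j) (X q) -> p = q.
Proof.
move=> Pp Pq; apply/eqP/negPn/negP => pq.
have [a [b [ap bq nab]]] := X_separated pq.
have /set0Pn[c] := X_meet_neq0 pq; rewrite inE => /andP[cp cq].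
have /negP := no_parallel j nab; apply.
exact: (parallel_trans (M_matroid j) (Pp a c ap cp) (Pq c b cq bq)).
Qed.

Lemma decomposition_total_rank_ge : n%:Z <= sigma [set: E].
Proof.
have [g gP] := fin_all_exists exists_parallel_set.
have g_inj : injective g.
  by move=> p q gpq; apply: (parallel_set_unique (gP p)); rewrite gpq; exact: gP.
rewrite sigma_sum.
apply: le_trans (card_support_le_sum (fun j => rank_ge0 (M_poly j) _)).
rewrite lez_nat -[X in (X <= _)%N]card_ord -(card_imset predT g_inj).
apply/subset_leq_card/subsetP => _ /imsetP[p _ ->]; rewrite inE.
exact: (parallel_set_rank_gt0 (M_matroid (g p)) (X_neq0 p) (gP p)).
Qed.

End Decomposition.

Lemma indecomposable_of_total_lt (sigma : {set E} -> int) :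
  (forall A, small_set X A -> sigma A = hyp_rho X A) -> sigma [set: E] < n%:Z ->
  indecomposable sigma.
Proof.
move=> sigma_small sigma_lt [k [M [M_matroid sigma_sum]]].
have := decomposition_total_rank_ge M_matroid sigma_sum sigma_small.
by rewrite leNgt sigma_lt.
Qed.

End Hypergraph.

Theorem theorem2p15 (E : finType) (n : nat) (X : 'I_n -> {set E})
  (Xinj : injective X)
  (Xne : forall i, X i != set0)
  (Hinter : forall i j, i != j -> (#|X i :&: X j| <= 1)%N)
  (Hcomplete : forall i j, i != j -> X i :&: X j != set0)
  (Hpair : forall p q, p != q ->
     exists a b, [/\ a \in X p, b \in X q &
                     forall i, ~ (a \in X i /\ b \in X i)]) :
  (forall sigma : {set E} -> int,
     polymatroid sigma ->
     (forall A, small_set X A -> sigma A = hyp_rho X A) ->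
     sigma [set: E] < n%:Z ->
     indecomposable sigma)
  /\
  (forall s : int,
     (forall A, small_set X A -> hyp_rho X A <= s) ->
     s < n%:Z ->
     indecomposable (truncation (hyp_rho X) s)).
Proof.
have indecomposable_of_lt :=
  indecomposable_of_total_lt Hinter Xne Hcomplete Hpair.
split=> [sigma _ | s rho_small_le s_lt]; first exact: indecomposable_of_lt.
apply: indecomposable_of_lt; rewrite /truncation.
- by move=> A /rho_small_le; apply: min_l.
- by apply: le_lt_trans s_lt; rewrite ge_min lexx orbT.
Qed.
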